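(* Let $G\cong\mathbb{Z}_m\times Q_{2^n}$, where $m$ is odd and $n\ge 3$. Then the difference graph $\mathcal{D}(G)$ is connected and has diameter at most $3$.
   Context: For a finite group $G$ with identity $e$: the intersection power graph $\mathcal{G}_I(G)$ has vertex set $G$, two distinct non-identity vertices $x,y$ being adjacent iff $\langle x\rangle\cap\langle y\rangle\neq\{e\}$, and $e$ being adjacent to every other vertex. The power graph $\mathcal{P}(G)$ has vertex set $G$, two distinct vertices being adjacent iff one is a power of the other. The difference graph $\mathcal{D}(G)$ is the graph on vertex set $G$ with edge set $E(\mathcal{G}_I(G))\setminus E(\mathcal{P}(G))$, with all isolated vertices removed. $Q_{2^n}$ is the generalized quaternion group $\langle x,y\mid x^{2^{n-1}}=1,\ y^2=x^{2^{n-2}},\ y^{-1}xy=x^{-1}\rangle$ of order $2^n$. *)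

From mathcomp Require Import all_boot all_fingroup.
From mathcomp Require Import zmodp cyclic gproduct extremal.
Set Implicit Arguments. Unset Strict Implicit. Unset Printing Implicit Defensive.
Local Open Scope group_scope.

Section Graphs.
Variable gT : finGroupType.
Implicit Types (G : {set gT}) (x y : gT).

Definition ipow_adj G x y : bool :=
  [&& x \in G, y \in G, x != y &
      [|| x == 1, y == 1 | <[x]> :&: <[y]> != 1]].

Definition pow_adj G x y : bool :=
  [&& x \in G, y \in G, x != y & (x \in <[y]>) || (y \in <[x]>)].

Definition diff_adj G x y : bool := ipow_adj G x y && ~~ pow_adj G x y.

(* Vertex set of D(G): the non-isolated vertices. *)
Definition diff_vertices G : {set gT} :=
  [set x in G | [exists y in G, diff_adj G x y]].

Definition diff_dist_le G k x y : Prop :=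
  exists2 p : seq gT, size p <= k & path (diff_adj G) x p && (last x p == y).

End Graphs.

From mathcomp Require Import all_boot all_fingroup.
From mathcomp Require Import zmodp cyclic gproduct extremal pgroup zify.
Set Implicit Arguments. Unset Strict Implicit. Unset Printing Implicit Defensive.
Local Open Scope group_scope.

(* In Z_m x Q_(2^n) the elements of odd order are central, there is a unique
   involution, and Q_(2^n) has three distinct cyclic subgroups <k_0>, <k_1>,
   <k_2> of order 4.  Two cyclic subgroups of even order both contain the
   involution, so they meet nontrivially, while a cyclic group contains at
   most one subgroup of order 4.  Hence for odd-order a, b and i <> j neither
   of a k_i, b k_j is a power of the other: they are adjacent in D(G).  A
   vertex u of even order is adjacent to every k_i outside <u>, which
   excludes at most one index; a vertex u of odd order with a neighbour y is
   adjacent to every y_(2') k_i.  Choosing i <> j avoiding the excluded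
   indices of u and v gives a path u - a k_i - b k_j - v. *)

Section DifferenceGraph.
Variable gT : finGroupType.
Implicit Types (G : {set gT}) (x y : gT).

Lemma diff_adjE G x y :
  diff_adj G x y =
  [&& x \in G, y \in G, x \notin <[y]>, y \notin <[x]> & <[x]> :&: <[y]> != 1].
Proof.
rewrite /diff_adj /ipow_adj /pow_adj.
case: (x \in G) (y \in G) => [] [] //=.
case x_y: (x \in <[y]>); case y_x: (y \in <[x]>); rewrite /= ?andbT;
  try by case: (x != y); rewrite ?andbF.
rewrite andbF andbT.
have -> : x != y by apply: contraFneq x_y => ->; apply: cycle_id.
have -> : (x == 1) = false by apply: contraFF x_y => /eqP->; apply: group1.
by have -> : (y == 1) = false by apply: contraFF y_x => /eqP->; apply: group1.
Qed.

Lemma diff_adj_sym G x y : diff_adj G x y = diff_adj G y x.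
Proof.
rewrite !diff_adjE setIC.
by case: (x \in G); case: (y \in G); case: (x \in <[y]>); case: (y \in <[x]>).
Qed.

Lemma diff_adj_vertex G x y : diff_adj G x y -> x \in diff_vertices G.
Proof.
move=> xy; rewrite inE; have := xy; rewrite diff_adjE => /and3P[-> yG _].
by apply/exists_inP; exists y.
Qed.

Lemma diff_adj_nprime G x y : diff_adj G x y -> ~~ prime #[x].
Proof.
rewrite diff_adjE => /and5P[_ _ x_y _ meet_xy].
apply/negP => /(prime_subgroupVti <[y]>%G)[|meet1].
  by rewrite cycle_subG (negbTE x_y).
by rewrite setIC meet1 eqxx in meet_xy.
Qed.

End DifferenceGraph.

Lemma card_gt2_fresh (T : finType) (a b : T) :
  2 < #|T| -> exists2 c, c != a & c != b.
Proof.
move=> T_gt2; have /set0Pn[c] : ~: [set a; b] != set0.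
  rewrite -card_gt0; have := cardsC [set a; b]; rewrite cards2.
  by case: (a != b) => /= card_T; move: T_gt2; rewrite -card_T; lia.
by rewrite !inE negb_or => /andP[]; exists c.
Qed.

Section CyclicFacts.
Variable gT : finGroupType.
Implicit Types (H : {group gT}) (a b g t x : gT).

Lemma mem_cycle_subG H x t : x \in H -> t \in <[x]> -> t \in H.
Proof. by rewrite -cycle_subG => /subsetP; apply. Qed.

Lemma eq_cycle_in_cycle g a b :
  #[a] = #[b] -> a \in <[g]> -> b \in <[g]> -> <[a]> = <[b]>.
Proof.
move=> oab ag bg; apply/eqP.
by rewrite (eq_subG_cyclic (cycle_cyclic g)) ?cycle_subG // -!orderE oab.
Qed.

Lemma mem_cycle_constt (pi : nat_pred) g t :
  t \in <[g]> -> pi.-elt t -> t \in <[g.`_pi]>.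
Proof. by case/cycleP=> e -> pi_t; rewrite -(constt_p_elt pi_t) consttX mem_cycle. Qed.

Lemma consttM_split (pi : nat_pred) a x :
  commute a x -> pi^'.-elt a -> pi.-elt x -> (a * x).`_pi = x /\ (a * x).`_pi^' = a.
Proof.
move=> cax pi'a pix.
have /constt1P a_pi : pi^'.-elt a := pi'a.
have /constt1P x_pi' : pi^'^'.-elt x by rewrite p_eltNK.
by rewrite !consttM // (constt_p_elt pix) (constt_p_elt pi'a) a_pi x_pi' mul1g mulg1.
Qed.

End CyclicFacts.

Section QuaternionLike.
Variable gT : finGroupType.

Definition quaternion_like (G : {set gT}) (k : 'I_3 -> gT) : Prop :=
  [/\ {in G &, forall u v, #[u] = 2 -> #[v] = 2 -> u = v},
      forall i, k i \in G,
      forall i, #[k i] = 4,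
      injective (fun i => <[k i]>)
    & {in G, forall a i, odd #[a] -> commute a (k i)}].

Variables (G : {group gT}) (k : 'I_3 -> gT).
Hypothesis involution_uniq : {in G &, forall u v, #[u] = 2 -> #[v] = 2 -> u = v}.
Hypothesis k_in : forall i, k i \in G.
Hypothesis order_k : forall i, #[k i] = 4.
Hypothesis cycle_k_inj : injective (fun i => <[k i]>).
Hypothesis odd_commute_k : {in G, forall a i, odd #[a] -> commute a (k i)}.

Lemma cycle_meet_even g h :
  g \in G -> h \in G -> ~~ odd #[g] -> ~~ odd #[h] -> <[g]> :&: <[h]> != 1.
Proof.
rewrite -!dvdn2 => gG hG /(Cauchy (isT : prime 2))[s sg os].
move=> /(Cauchy (isT : prime 2))[t th ot].
have st : s = t := involution_uniq (mem_cycle_subG gG sg) (mem_cycle_subG hG th) os ot.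
by apply/trivgPn; exists s; rewrite ?inE ?sg ?st ?th // -order_gt1 ot.
Qed.

Lemma cycle_k_uniq g i j : k i \in <[g]> -> k j \in <[g]> -> i = j.
Proof.
move=> ig jg; apply: cycle_k_inj.
by apply: (eq_cycle_in_cycle _ ig jg); rewrite !order_k.
Qed.

Lemma even_order_of_k g i : k i \in <[g]> -> ~~ odd #[g].
Proof. by move/order_dvdG; rewrite order_k -dvdn2; apply: dvdn_trans. Qed.

Lemma constt_mul_k a i : a \in G -> odd #[a] ->
  (a * k i).`_2 = k i /\ (a * k i).`_2^' = a.
Proof.
move=> aG odd_a; apply: consttM_split; first exact: odd_commute_k.
  by rewrite /p_elt -odd_2'nat.
by rewrite /p_elt order_k.
Qed.

Lemma k_in_cycle_mul a i : a \in G -> odd #[a] -> k i \in <[a * k i]>.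
Proof. by move=> aG odd_a; rewrite -{1}(constt_mul_k i aG odd_a).1 cycle_constt. Qed.

Lemma diff_adj_mul_k a b i j :
  a \in G -> b \in G -> odd #[a] -> odd #[b] -> i != j ->
  diff_adj G (a * k i) (b * k j).
Proof.
move=> aG bG odd_a odd_b ij.
have ki := k_in_cycle_mul i aG odd_a; have kj := k_in_cycle_mul j bG odd_b.
rewrite diff_adjE (groupM aG (k_in i)) (groupM bG (k_in j)) /=; apply/and3P; split.
- apply: contra ij => /mem_cycle_subG/(_ ki) ki_bkj.
  exact/eqP/(cycle_k_uniq ki_bkj kj).
- apply: contra ij => /mem_cycle_subG/(_ kj) kj_aki.
  exact/eqP/(cycle_k_uniq ki kj_aki).
- apply: cycle_meet_even; rewrite ?groupM ?k_in //.
  + exact: even_order_of_k ki.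
  + exact: even_order_of_k kj.
Qed.

Lemma diff_adj_even_k u y i :
  diff_adj G u y -> ~~ odd #[u] -> k i \notin <[u]> -> diff_adj G u (k i).
Proof.
move=> uy even_u ki_u; have uG : u \in G by move: uy; rewrite diff_adjE => /andP[].
rewrite diff_adjE uG k_in ki_u cycle_meet_even ?k_in ?order_k // /= andbT.
apply: contra ki_u => u_ki.
have o_u : #[u] = 4.
  have : #[u] <= 4 by apply: dvdn_leq => //; rewrite -(order_k i); apply: order_dvdG.
  by move: (order_gt0 u) (diff_adj_nprime uy) even_u; case: #[u] => [|[|[|[|[|o]]]]].
have <- : <[k i]> = <[u]>.
  by apply: (eq_cycle_in_cycle _ (cycle_id (k i)) u_ki); rewrite o_u order_k.
exact: cycle_id.
Qed.

Lemma diff_adj_odd_mul_k u y i :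
  diff_adj G u y -> odd #[u] -> diff_adj G u (y.`_2^' * k i).
Proof.
rewrite diff_adjE => /and5P[uG yG u_y _ meet_uy] odd_u.
set a := y.`_2^'.
have a_y : a \in <[y]> := cycle_constt 2^' y.
have aG : a \in G := mem_cycle_subG yG a_y.
have odd_a : odd #[a] by rewrite odd_2'nat; apply: p_elt_constt.
have a_w := (constt_mul_k i aG odd_a).2.
have odd_in_a t : t \in <[a * k i]> -> odd #[t] -> t \in <[a]>.
  by move=> t_w odd_t; rewrite -a_w mem_cycle_constt // /p_elt -odd_2'nat.
rewrite diff_adjE uG (groupM aG (k_in i)) /=; apply/and3P; split.
- apply: contra u_y => /odd_in_a/(_ odd_u); exact: mem_cycle_subG.
- apply: contraL odd_u => /mem_cycle_subG/(_ (k_in_cycle_mul i aG odd_a)).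
  exact: even_order_of_k.
have [t /setIP[t_u t_y] t_neq1] := trivgPn _ meet_uy.
apply/trivgPn; exists t; rewrite // inE t_u /=.
have t_a : t \in <[a]>.
  by rewrite mem_cycle_constt // /p_elt -odd_2'nat (dvdn_odd (order_dvdG t_u)).
by apply: mem_cycle_subG t_a; rewrite -{1}a_w cycle_constt.
Qed.

Lemma diff_vertex_near_k u :
  u \in diff_vertices G ->
  exists a e, [/\ a \in G, odd #[a] & forall i, i != e -> diff_adj G u (a * k i)].
Proof.
rewrite inE => /andP[uG /exists_inP[y yG uy]].
have [odd_u | even_u] := boolP (odd #[u]).
  exists y.`_2^', ord0; split=> [||i _]; last exact: diff_adj_odd_mul_k.
    by apply: (mem_cycle_subG yG); apply: cycle_constt.
  by rewrite odd_2'nat; apply: p_elt_constt.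
exists 1, (odflt ord0 [pick e | k e \in <[u]>]); split=> [||i]; rewrite ?order1 //.
rewrite mul1g; case: pickP => [e ke_u | no_k_u] /= i_e.
  apply: (diff_adj_even_k uy even_u).
  by apply: contra i_e => ki_u; rewrite (cycle_k_uniq ki_u ke_u).
by rewrite (diff_adj_even_k uy even_u) ?no_k_u.
Qed.

Lemma diff_graph_diam3 :
  diff_vertices G != set0 /\
  (forall x y, x \in diff_vertices G -> y \in diff_vertices G ->
     diff_dist_le G 3 x y).
Proof.
have odd1 : odd #[1 : gT] by rewrite order1.
split.
  apply/set0Pn; exists (k ord0); apply: (@diff_adj_vertex _ _ _ (k ord_max)).
  have neq_0_max : ord0 != ord_max :> 'I_3 by [].
  by have := diff_adj_mul_k (group1 G) (group1 G) odd1 odd1 neq_0_max; rewrite !mul1g.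
move=> u v /diff_vertex_near_k[a [e_u [aG odd_a adj_u]]].
move=> /diff_vertex_near_k[b [e_v [bG odd_b adj_v]]].
have card_I3 : 2 < #|'I_3| by rewrite card_ord.
have [i i_u _] := card_gt2_fresh e_u e_u card_I3.
have [j j_i j_v] := card_gt2_fresh i e_v card_I3.
exists [:: a * k i; b * k j; v] => //.
by rewrite /= adj_u // diff_adj_mul_k 1?eq_sym // diff_adj_sym adj_v // eqxx.
Qed.

End QuaternionLike.

Lemma injm_cycle_inj (aT rT : finGroupType) (D : {group aT})
    (f : {morphism D >-> rT}) x y :
  'injm f -> x \in D -> y \in D -> <[f x]> = <[f y]> -> <[x]> = <[y]>.
Proof.
move=> injf xD yD; rewrite -!morphim_cycle // => /(injm_morphim_inj injf); apply;
  by rewrite cycle_subG.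
Qed.

Lemma quaternion_like_injm (aT rT : finGroupType) (D G : {group aT})
    (f : {morphism D >-> rT}) (k : 'I_3 -> aT) :
  'injm f -> G \subset D -> quaternion_like G k -> quaternion_like (f @* G) (f \o k).
Proof.
move=> injf sGD [inv_uniq k_in order_k cycle_k_inj odd_commute_k].
have kD i : k i \in D := subsetP sGD _ (k_in i).
split=> /=.
- move=> _ _ /morphimP[u uD uG ->] /morphimP[v vD vG ->].
  by rewrite !order_injm // => ou ov; rewrite (inv_uniq u v).
- by move=> i; rewrite mem_morphim.
- by move=> i; rewrite order_injm.
- by move=> i j /(injm_cycle_inj injf (kD i) (kD j)) /cycle_k_inj.
- move=> _ /morphimP[a aD aG ->] i; rewrite order_injm // => /(odd_commute_k a aG i).
  by rewrite /commute -!morphM // => ->.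
Qed.

Lemma quaternion_like_setX (aT qT : finGroupType) (A : {group aT}) (H : {group qT})
    (k : 'I_3 -> qT) :
  odd #|A| -> quaternion_like H k -> quaternion_like (setX A H) (fun i => (1, k i)).
Proof.
move=> odd_A [inv_uniq k_in order_k cycle_k_inj odd_commute_k].
have order_pair1 (q : qT) : #[(1 : aT, q)] = #[q] :=
  order_injm (injm_pair1g aT qT) (in_setT q).
have order_fst (u : aT * qT) : #[u.1] %| #[u] :=
  morph_order (fst_morphism aT qT) (in_setT u).
have order_snd (u : aT * qT) : #[u.2] %| #[u] :=
  morph_order (snd_morphism aT qT) (in_setT u).
split.
- move=> [u1 u2] [v1 v2]; rewrite !in_setX /= => /andP[u1A u2H] /andP[v1A v2H] ou ov.
  have dvd2_in_A_eq1 w : w \in A -> #[w] %| 2 -> w = 1.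
    move=> wA w_2; apply/eqP; rewrite -order_eq1 -dvdn1.
    have := coprime2n #|A|; rewrite odd_A /coprime => /eqP <-.
    by rewrite dvdn_gcd w_2 order_dvdG.
  have u1_1 : u1 = 1 by apply: dvd2_in_A_eq1; rewrite // -ou (order_fst (u1, u2)).
  have v1_1 : v1 = 1 by apply: dvd2_in_A_eq1; rewrite // -ov (order_fst (v1, v2)).
  move: ou ov; rewrite u1_1 v1_1 !order_pair1 => ou ov.
  by rewrite (inv_uniq u2 v2).
- by move=> i; rewrite in_setX group1 k_in.
- by move=> i; rewrite order_pair1.
- move=> i j /(injm_cycle_inj (injm_pair1g aT qT) (in_setT (k i)) (in_setT (k j))).
  exact: cycle_k_inj.
- move=> [a1 a2]; rewrite in_setX => /andP[_ a2H] i odd_a.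
  have /(odd_commute_k a2 a2H i) c : odd #[a2] := dvdn_odd (order_snd (a1, a2)) odd_a.
  change ((a1 * 1, a2 * k i) = (1 * a1, k i * a2)).
  by rewrite c mulg1 mul1g.
Qed.

Lemma quaternion_like_quaternion n :
  2 < n -> exists k, quaternion_like [set: 'Q_(2 ^ n)] k.
Proof.
move=> n_gt2.
have [[x y] genQ [order_y _ _]] := generators_quaternion n_gt2 (isog_refl _).
have [[_ order_out _] _ [_ _ inv_uniq _ _] _ _] :=
  quaternion_structure n_gt2 genQ (isog_refl _).
have [_ _ order_x /setDP[_ y_x]] := genQ.
have xy_x : x * y \notin <[x]> by rewrite groupMl ?cycle_id.
have le2n : 2 <= n.-1 by lia.
pose x4 := x ^+ (2 ^ (n.-1 - 2)).
have order_x4 : #[x4] = 4 by rewrite (orderXexp _ order_x) subKn.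
have cycle_x4 t : t \notin <[x]> -> <[t]> != <[x4]>.
  move=> t_x; apply: contra t_x => /eqP eq_t.
  have : t \in <[x4]> by rewrite -eq_t cycle_id.
  exact: mem_cycle_subG (mem_cycle x _).
have cycle_xy : <[x * y]> != <[y]>.
  apply: contra y_x => /eqP eq_xy.
  have xy_y : x * y \in <[y]> by rewrite -eq_xy cycle_id.
  have x_y : x \in <[y]> by rewrite -(groupMr _ (cycle_id y)).
  suff -> : <[x]> = <[y]> by apply: cycle_id.
  apply/eqP; rewrite eqEcard cycle_subG x_y -!orderE order_y order_x.
  by rewrite -[4]/(2 ^ 2)%N leq_exp2l.
exists (fun i : 'I_3 => nth 1 [:: x4; y; x * y] i); split.
- move=> u v _ _ ou ov.
  by rewrite (inv_uniq u (in_setT u) ou) (inv_uniq v (in_setT v) ov).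
- by move=> i; rewrite in_setT.
- case=> [[|[|[|//]]] ?] //=; apply: order_out.
  by rewrite !inE xy_x.
- move=> i j; apply: contra_eq.
  case: i j => [[|[|[|//]]] ?] [[|[|[|//]]] ?] //= _;
    by rewrite ?cycle_x4 ?cycle_xy // eq_sym ?cycle_x4 ?cycle_xy.
move=> a _ i odd_a; suff -> : a = 1 by apply: commute_sym; apply: commute1.
apply/eqP; rewrite -order_eq1; apply/eqP/(@pnat_1 2); last by rewrite -odd_2'nat.
by apply: pnat_dvd (order_dvdG (in_setT a)) _; rewrite card_quaternion // pnatX.
Qed.

Unset Implicit Arguments.

Theorem lemma4p12 (gT : finGroupType) (G : {group gT}) (m n : nat) :
  odd m -> 3 <= n ->
  G \isog setX (Zp m) 'Q_(2 ^ n) ->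
  diff_vertices G != set0 /\
  (forall x y, x \in diff_vertices G -> y \in diff_vertices G ->
     diff_dist_le G 3 x y).
Proof.
move=> odd_m n_gt2; rewrite isog_sym => /isogP[f injf <-].
have [k Q_k] := quaternion_like_quaternion n_gt2.
have odd_Zp : odd #|Zp m| by rewrite card_Zp ?odd_gt0.
have [] := quaternion_like_injm injf (subxx _) (quaternion_like_setX odd_Zp Q_k).
exact: diff_graph_diam3.
Qed.
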